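(* Let $m>n$ be coprime positive integers. For $(\lambda,k)\in X\times\mathbb Z$ define $x(\lambda,k)=\nu^{-k}x(\lambda)+k\,\mathbf m\in\mathbb Z^{n|m}$. Then $x(\overline\lambda,k+1)=x(\lambda,k)$ whenever $\lambda_1=m$, so $x$ induces a map $[X\times\mathbb Z]\to\mathbb Z^{n|m}$; this induced map is injective and its image is exactly the $\mathfrak T_{iso}$-orbit $\mathcal O$ of $\Lambda_0$.
   Context: $X$ is the set of partitions $\lambda=(\lambda_1\ge\dots\ge\lambda_n\ge0)$ with $\lambda_1\le m$; $\lambda'_j=\#\{i:\lambda_i\ge j\}$ for $j\in[m]$. For $\lambda\in X$ with $\lambda_1=m$ put $\overline\lambda=(\lambda_2,\dots,\lambda_n,0)$. Let $\sim$ be the smallest equivalence relation on $X\times\mathbb Z$ with $(\lambda,k)\sim(\overline\lambda,k+1)$ whenever $\lambda_1=m$, and $[X\times\mathbb Z]$ the set of equivalence classes. Elements of $\mathbb Z^{n|m}$ are written $\Lambda=(a_1,\dots,a_n|b_1,\dots,b_m)$, identified with $\sum_i a_i\epsilon_i-\sum_j b_j\delta_j$. For $\lambda\in X$, $x(\lambda)=(a_1,\dots,a_n|b_1,\dots,b_m)$ with $a_i=m(n-i)+n\lambda_{n+1-i}$ and $b_j=n(j-1)+m\lambda'_j$. $\nu$ is the linear map with $\nu(a_1,\dots,a_n|b)=(a_n,a_1,\dots,a_{n-1}|b)$ (i.e. $\nu\epsilon_i=\epsilon_{i+1}$ indices mod $n$, $\nu\delta_j=\delta_j$), and $\mathbf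 m=(m,\dots,m|m,\dots,m)$. $\Lambda_0=x(\emptyset)=(m(n-1),m(n-2),\dots,m,0\,|\,0,n,2n,\dots,n(m-1))$. For $\alpha=\epsilon_i-\delta_j$ ($i\in[n],j\in[m]$) let $\Pi_\alpha=\{\Lambda: a_i=b_j\}$, $\Pi_{-\alpha}=\{\Lambda:a_i-b_j=n-m\}$, and let $\tau_\alpha:\Pi_\alpha\to\Pi_{-\alpha}$ be $\Lambda\mapsto\Lambda+n\epsilon_i-m\delta_j$ (add $n$ to $a_i$ and $m$ to $b_j$), with inverse $\tau_{-\alpha}$. The $\mathfrak T_{iso}$-orbit of $\Lambda_0$ is the set of all elements obtained from $\Lambda_0$ by finite sequences of maps $\tau_{\pm\alpha}$, each applied to an element of its domain $\Pi_{\pm\alpha}$. *)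

From mathcomp Require Import all_boot all_order all_algebra.
From Stdlib Require Import Relations.
Set Implicit Arguments. Unset Strict Implicit. Unset Printing Implicit Defensive.
Import GRing.Theory Num.Theory.
Local Open Scope ring_scope.
Local Open Scope nat_scope.

(* Elements of Z^{n|m}: (a_1..a_n | b_1..b_m), 0-indexed: a_{i+1} = L.1 i. *)
Definition sv (n m : nat) := ({ffun 'I_n -> int} * {ffun 'I_m -> int})%type.

(* Partitions lambda = (lambda_1 >= ... >= lambda_n >= 0) with lambda_1 <= m,
   represented as a seq of length n; lambda_{i+1} = nth 0 l i. *)
Definition inX (n m : nat) (l : seq nat) : bool :=
  [&& size l == n, sorted geq l & all (fun x => x <= m) l].

Definition conj_part (l : seq nat) (j : nat) : nat := count (fun x => j <= x) l.

(* x(lambda): a_i = m(n-i) + n lambda_{n+1-i},  b_j = n(j-1) + m lambda'_j *)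
Definition xpart (n m : nat) (l : seq nat) : sv n m :=
  ([ffun i : 'I_n => ((m * (n - 1 - i) + n * nth 0 l (n - 1 - i))%N)%:Z],
   [ffun j : 'I_m => ((n * j + m * conj_part l j.+1)%N)%:Z]).

Definition nu (n m : nat) (L : sv n m) : sv n m :=
  ([ffun i : 'I_n => L.1 (ord_pred i)], L.2).
Definition nuinv (n m : nat) (L : sv n m) : sv n m :=
  ([ffun i : 'I_n => L.1 (ordS i)], L.2).

Definition nupow (n m : nat) (k : int) (L : sv n m) : sv n m :=
  match k with
  | Posz p => iter p (@nu n m) L
  | Negz p => iter p.+1 (@nuinv n m) L
  end.

Definition addm (n m : nat) (k : int) (L : sv n m) : sv n m :=
  ([ffun i => L.1 i + k * (m%:Z)], [ffun j => L.2 j + k * (m%:Z)])%R.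

Definition xk (n m : nat) (l : seq nat) (k : int) : sv n m :=
  addm k (nupow (- k)%R (xpart n m l)).

Definition lbar (l : seq nat) : seq nat := rcons (behead l) 0%N.

Definition gen_rel (n m : nat) (p q : seq nat * int) : Prop :=
  [/\ inX n m p.1, nth 0%N p.1 0 = m & q = (lbar p.1, (p.2 + 1)%R)].

Definition equivX (n m : nat) : relation (seq nat * int) :=
  clos_refl_sym_trans _ (@gen_rel n m).

Definition addij (n m : nat) (L : sv n m) (i : 'I_n) (j : 'I_m) (da db : int)
  : sv n m :=
  ([ffun i' => if i' == i then L.1 i' + da else L.1 i'],
   [ffun j' => if j' == j then L.2 j' + db else L.2 j'])%R.

(* one application of tau_alpha (on Pi_alpha) or tau_{-alpha} (on Pi_{-alpha}),
   alpha = eps_i - delta_j *)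
Definition tau_step (n m : nat) (L L' : sv n m) : Prop :=
  exists (i : 'I_n) (j : 'I_m),
    (L.1 i = L.2 j /\ L' = addij L i j n%:Z m%:Z) \/
    ((L.1 i - L.2 j = n%:Z - m%:Z)%R /\ L' = addij L i j (- n%:Z) (- m%:Z))%R.

Definition Lambda0 (n m : nat) : sv n m := xpart n m (nseq n 0%N).

Definition in_Tiso_orbit (n m : nat) (L : sv n m) : Prop :=
  clos_refl_trans _ (@tau_step n m) (Lambda0 n m) L.

From mathcomp Require Import all_boot all_order all_algebra.
From Stdlib Require Import Relations.
From mathcomp Require Import zify ring.
Set Implicit Arguments. Unset Strict Implicit. Unset Printing Implicit Defensive.
Import Order.TTheory GRing.Theory Num.Theory.
Local Open Scope ring_scope.

(* Write a point of Z^{n|m} as a_i = m(n-1-i) + n alpha_i and b_j = n j + m beta_j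
   (indices from 0) and extend alpha to F : Z -> Z by F (r + n q) = alpha_r + m q.
   Call (alpha, beta) admissible when F is nondecreasing and, for each j < m, n - beta_j
   is the point where F jumps above j.  A move tau_{+-alpha} adds +-1 to one alpha_i and
   one beta_j; since m and n are coprime, its applicability condition says that F takes
   the value j (resp. j + 1) at a point s = i mod n with n - beta_j = s + 1 (resp. s),
   and the move keeps the pair admissible.  Conversely, if alpha <> 0 some inverse move
   lowers sum |alpha_i|, and alpha = 0 is Lambda_0: the orbit is the set of admissible
   points.  For x(lambda, k), F is the extension G_lambda of r |-> lambda_{n-r} translated
   by k, and nondecreasing F are exactly such translates, which gives the image.  If
   lambda_1 = m then G_lambda-bar is G_lambda translated by one step; equal points
   x(lambda, k) = x(lambda', k') make G_lambda' a translate of G_lambda by k' - k, and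
   peeling off one step at a time with lambda |-> lambda-bar gives injectivity. *)

Lemma exists_crossing (F : int -> int) (j x y : int) : x <= y -> F x <= j < F y ->
  exists s, x < s <= y /\ F (s - 1) <= j < F s.
Proof.
move=> le_xy; have [d ->] : exists d : nat, y = x + d%:Z by exists `|y - x|%N; lia.
elim: d => [|d IHd] in le_xy *; first by rewrite addr0; lia.
have -> : x + d.+1%:Z = x + d%:Z + 1 by lia.
case: (lerP (F (x + d%:Z)) j) => [le_j /andP[_ lt_j]|lt_j /andP[le_x _]].
  by exists (x + d%:Z + 1); rewrite addrK le_j lt_j; lia.
have [s ?] := IHd ltac:(lia) ltac:(by rewrite le_x lt_j).
by exists s; lia.
Qed.

Lemma absz_modz_lt (d : nat) (y : int) : (0 < d)%N -> (`|(y %% d)%Z|%N < d)%N.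
Proof. by move=> d_gt0; have := modz_ge0 y (d := d%:Z); have := ltz_pmod y (d := d%:Z); lia. Qed.

Lemma absz_modz_divz_eq (d : nat) (y : int) : (0 < d)%N ->
  y = `|(y %% d)%Z|%N%:Z + d%:Z * (y %/ d)%Z.
Proof. by move=> d_gt0; rewrite gez0_abs ?modz_ge0 1?{1}(divz_eq y d); [ring | lia..]. Qed.

Lemma sorted_geq_nth_count (l : seq nat) (t p : nat) : sorted geq l -> (p < size l)%N ->
  (t <= nth 0%N l p)%N = (p < count (leq t) l)%N.
Proof.
elim: l p => [|x l IHl] p //= sorted_xl lt_p.
have sorted_l : sorted geq l := path_sorted sorted_xl.
have x_ge : all (geq x) l := order_path_min (rev_trans leq_trans) sorted_xl.
have count0 : (t <= x)%N = false -> count (leq t) l = 0%N.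
  move=> lt_xt; apply/eqP; rewrite -leqn0 leqNgt -has_count; apply/hasPn => y /(allP x_ge) /= le_yx.
  by apply: contraFN lt_xt => /leq_trans; apply.
case: p lt_p => [|p] lt_p /=; last rewrite IHl //.
all: case le_tx: (t <= x)%N; [by rewrite add1n ?ltnS | by rewrite count0 // !ltn0].
Qed.

Section Orbit.

Variables n m : nat.
Hypothesis n_gt0 : (0 < n)%N.

Notation res y := `|(y %% n)%Z|%N.

(** * Quasi-periodic extensions *)

Lemma resMDr (y d : int) : res (y + n%:Z * d) = res y.
Proof. by rewrite addrC mulrC modzMDl. Qed.

Lemma res_small (r : nat) (q : int) : (r < n)%N -> res (r%:Z + n%:Z * q) = r.
Proof. by move=> lt_rn; rewrite resMDr modz_small //; lia. Qed.

Lemma eq_resP (y s : int) : res y = res s -> exists d : int, y = s + n%:Z * d.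
Proof.
move=> eq_res; exists ((y %/ n)%Z - (s %/ n)%Z).
by rewrite {1}[y](absz_modz_divz_eq _ n_gt0) {1}[s](absz_modz_divz_eq _ n_gt0) eq_res; ring.
Qed.

Definition qext (a : nat -> int) (y : int) : int := a (res y) + m%:Z * (y %/ n)%Z.

Lemma qextE a (r : nat) (q : int) : (r < n)%N -> qext a (r%:Z + n%:Z * q) = a r + m%:Z * q.
Proof.
move=> lt_rn; rewrite /qext res_small //; congr (_ + _ * _).
rewrite addrC mulrC divzMDl; last lia.
by rewrite divz_small ?add0r //; lia.
Qed.

Lemma qext_nat a (r : nat) : (r < n)%N -> qext a r%:Z = a r.
Proof. by move=> lt_rn; have := qextE a 0 lt_rn; rewrite !mulr0 !addr0. Qed.

Lemma qextD a (y d : int) : qext a (y + n%:Z * d) = qext a y + m%:Z * d.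
Proof.
rewrite {1 2}[y](absz_modz_divz_eq _ n_gt0) -addrA -mulrDr !qextE ?absz_modz_lt //; ring.
Qed.

Lemma qext_pred a (i : nat) : (i < n)%N ->
  qext a (i%:Z - 1) = if i == 0%N then a n.-1 - m%:Z else a i.-1.
Proof.
move=> lt_in; case: eqP => [->|i_neq0].
  by rewrite -(mulrN1 m%:Z) -qextE; [congr (qext a _) | ]; lia.
by rewrite -(qext_nat a (r := i.-1)); [congr (qext a _) | ]; lia.
Qed.

Lemma eq_qext a a' : (forall r, (r < n)%N -> a r = a' r) -> qext a =1 qext a'.
Proof. by move=> eq_a y; rewrite /qext eq_a ?absz_modz_lt. Qed.

Lemma qext_shift a (k y : int) : qext (fun r => qext a (r%:Z + k)) y = qext a (y + k).
Proof.
rewrite {1 2}[y](absz_modz_divz_eq _ n_gt0) (qextE (fun r => qext a (r%:Z + k))) ?absz_modz_lt //.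
by rewrite (addrAC (res y)%:Z) qextD.
Qed.

Definition add_at (a : nat -> int) (i : nat) (c : int) : nat -> int :=
  fun r => if r == i then a r + c else a r.

Lemma qext_add_at a i c y :
  qext (add_at a i c) y = qext a y + (if res y == i then c else 0).
Proof. by rewrite /qext /add_at; case: ifP => _; ring. Qed.

Hypothesis m_gt0 : (0 < m)%N.

Definition qnondecr (a : nat -> int) : Prop := forall y, qext a y <= qext a (y + 1).

Lemma qext_mono a : qnondecr a -> {homo qext a : x y / x <= y}.
Proof.
move=> mono x y le_xy; have [d ->] : exists d : nat, y = x + d%:Z by exists `|y - x|%N; lia.
elim: d => [|d IHd]; first by rewrite addr0.
by apply: le_trans IHd _; have -> : x + d.+1%:Z = x + d%:Z + 1 by lia.
Qed.

Definition crossing (a : nat -> int) (j s : int) : bool := qext a (s - 1) <= j < qext a s.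

Lemma crossing_uniq a j s s' : qnondecr a -> crossing a j s -> crossing a j s' -> s = s'.
Proof.
move=> mono /andP[? ?] /andP[? ?]; case: (ltgtP s s') => // [lt_ss | lt_s's].
- by have := qext_mono mono (ltac:(lia) : s <= s' - 1); lia.
- by have := qext_mono mono (ltac:(lia) : s' <= s - 1); lia.
Qed.

Lemma exists_qext_crossing a j : exists s, crossing a j s.
Proof.
pose c : int := `|a 0%N|%:Z + `|j|%:Z + 1.
have bounds : qext a (n%:Z * - c) <= j < qext a (n%:Z * c).
  by rewrite -[n%:Z * - c]add0r -[n%:Z * c]add0r !qextE //; nia.
have c_gt0 : 0 < c by rewrite /c; lia.
have le_xy : n%:Z * - c <= n%:Z * c by rewrite mulrN; nia.
by have [s [_ ?]] := exists_crossing le_xy bounds; exists s.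
Qed.

Lemma qnondecr_raise a s : qnondecr a -> qext a s < qext a (s + 1) ->
  qnondecr (add_at a (res s) 1).
Proof.
move=> mono lt_s y; have := mono y; rewrite !qext_add_at.
case: eqP => [/eq_resP[d ->] | _]; case: eqP => _ //=; try lia.
have -> : s + n%:Z * d + 1 = s + 1 + n%:Z * d by ring.
by rewrite !qextD; lia.
Qed.

Lemma qnondecr_lower a s : qnondecr a -> qext a (s - 1) < qext a s ->
  qnondecr (add_at a (res s) (-1)).
Proof.
move=> mono lt_s y; have := mono y; rewrite !qext_add_at.
case: eqP => _; case: eqP => [/eq_resP[d y1E] | _] //=; try lia.
rewrite y1E; have -> : y = s - 1 + n%:Z * d by rewrite -[y](addrK 1) y1E; ring.
by rewrite !qextD; lia.
Qed.

Lemma crossing_raise_at a s : qnondecr a -> crossing (add_at a (res s) 1) (qext a s) s.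
Proof.
move=> mono; rewrite /crossing !qext_add_at eqxx.
case: eqP => [/eq_resP[d sE] | _]; first by rewrite sE qextD; nia.
by have := qext_mono mono (ltac:(lia) : s - 1 <= s); lia.
Qed.

Lemma crossing_lower_at a s :
  qnondecr a -> crossing (add_at a (res s) (-1)) (qext a s - 1) (s + 1).
Proof.
move=> mono; rewrite /crossing !qext_add_at addrK eqxx.
case: eqP => [/eq_resP[d sE] | _]; first by rewrite sE qextD; nia.
by have := qext_mono mono (ltac:(lia) : s <= s + 1); lia.
Qed.

Lemma crossing_raise_other a (s j s' : int) :
  (forall d : int, j != qext a s + m%:Z * d) -> crossing a j s' ->
  crossing (add_at a (res s) 1) j s'.
Proof.
move=> j_off; rewrite /crossing !qext_add_at.
case: eqP => [/eq_resP[d ->] | _]; case: eqP => _; rewrite ?qextD; try lia.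
all: by have := j_off d; lia.
Qed.

Lemma crossing_lower_other a (s j s' : int) :
  (forall d : int, j != qext a s - 1 + m%:Z * d) -> crossing a j s' ->
  crossing (add_at a (res s) (-1)) j s'.
Proof.
move=> j_off; rewrite /crossing !qext_add_at.
case: eqP => _; case: eqP => [/eq_resP[d ->] | _]; rewrite ?qextD; try lia.
all: by have := j_off d; lia.
Qed.

(** * Admissible coordinates and the tau-moves *)

Definition encodes (L : sv n m) (a b : nat -> int) : Prop :=
  (forall i : 'I_n, L.1 i = (m * (n - 1 - i))%N%:Z + n%:Z * a i) /\
  (forall j : 'I_m, L.2 j = (n * j)%N%:Z + m%:Z * b j).

Definition admissible (a b : nat -> int) : Prop :=
  qnondecr a /\ forall j : 'I_m, crossing a j (n%:Z - b j).

Lemma encodes_add_at L a b (i : 'I_n) (j : 'I_m) (c : int) : encodes L a b ->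
  encodes (addij L i j (n%:Z * c) (m%:Z * c)) (add_at a i c) (add_at b j c).
Proof.
move=> [encL1 encL2]; split=> [i' | j']; rewrite ffunE /add_at.
- case: (i' =P i) => [-> | neq]; first by rewrite eqxx encL1; ring.
  by rewrite ifN_eq ?encL1 //; apply/eqP => /val_inj.
- case: (j' =P j) => [-> | neq]; first by rewrite eqxx encL2; ring.
  by rewrite ifN_eq ?encL2 //; apply/eqP => /val_inj.
Qed.

Lemma ord_neq_mod (j j' : 'I_m) (d : int) : j' != j -> j'%:Z != j%:Z + m%:Z * d.
Proof.
move=> neq; apply: contraNneq neq => eq_jj'; apply/eqP/val_inj => /=.
have d0 : d = 0 by have := ltn_ord j; have := ltn_ord j'; nia.
by move: eq_jj'; rewrite d0; lia.
Qed.

Lemma admissible_raise a b (i : 'I_n) (j : 'I_m) s :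
  admissible a b -> res s = i -> qext a s = j -> n%:Z - b j = s + 1 ->
  admissible (add_at a i 1) (add_at b j 1).
Proof.
move=> [mono cross] <- Fs bj; have := cross j; rewrite /crossing bj addrK => /andP[_ lt_j].
split=> [|j']; first by apply: qnondecr_raise; rewrite // Fs.
rewrite /add_at; case: (j' =P j) => [-> | /eqP neq]; rewrite ?eqxx.
  by rewrite opprD addrA bj addrK -Fs crossing_raise_at.
rewrite ifN_eq; last by apply: contraNneq neq => /val_inj ->.
by apply: crossing_raise_other => // d; rewrite Fs ord_neq_mod.
Qed.

Lemma admissible_lower a b (i : 'I_n) (j : 'I_m) s :
  admissible a b -> res s = i -> qext a s = j%:Z + 1 -> n%:Z - b j = s ->
  admissible (add_at a i (-1)) (add_at b j (-1)).
Proof.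
move=> [mono cross] <- Fs bj; have := cross j; rewrite /crossing bj => /andP[le_j _].
split=> [|j']; first by apply: qnondecr_lower => //; rewrite Fs ltzD1.
rewrite /add_at; case: (j' =P j) => [-> | /eqP neq]; rewrite ?eqxx.
  by rewrite opprD opprK addrA bj -[j%:Z](addrK 1) -Fs crossing_lower_at.
rewrite ifN_eq; last by apply: contraNneq neq => /val_inj ->.
by apply: crossing_lower_other => // d; rewrite Fs addrK ord_neq_mod.
Qed.

Lemma coprime_mul_eq (X Y : int) : coprime m n -> m%:Z * X = n%:Z * Y ->
  exists t, X = n%:Z * t /\ Y = m%:Z * t.
Proof.
move=> co_mn eq_XY; have co_nm : coprimez n%:Z m%:Z by rewrite coprimezE /= coprime_sym.
have : (n%:Z %| m%:Z * X)%Z by rewrite eq_XY dvdz_mulr.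
rewrite Gauss_dvdzr // => /dvdzP[t Xt]; exists t; split; first by rewrite Xt mulrC.
by apply: (@mulfI _ n%:Z); [lia | rewrite -eq_XY Xt; ring].
Qed.

Lemma tau_step_admissible L L' a b : coprime m n ->
  encodes L a b -> admissible a b -> tau_step L L' ->
  exists a' b', encodes L' a' b' /\ admissible a' b'.
Proof.
move=> co_mn encL adm [i [j [[eq_ij ->] | [eq_ij ->]]]]; case: (encL) => encL1 encL2;
  have ni : ((n - 1 - i)%N)%:Z = n%:Z - 1 - i%:Z by have := ltn_ord i; lia.
- have [t [bjE aiE]] : exists t, n%:Z - 1 - i%:Z - b j = n%:Z * t /\ j%:Z - a i = m%:Z * t.
    by apply: coprime_mul_eq => //; move: eq_ij; rewrite encL1 encL2 !PoszM ni; nia.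
  exists (add_at a i 1), (add_at b j 1); split.
    by have := encodes_add_at i j 1 encL; rewrite !mulr1.
  by apply: (admissible_raise (s := i%:Z + n%:Z * t)); rewrite ?res_small ?qextE //; lia.
- have [t [bjE aiE]] : exists t, n%:Z - i%:Z - b j = n%:Z * t /\ j%:Z + 1 - a i = m%:Z * t.
    by apply: coprime_mul_eq => //; move: eq_ij; rewrite encL1 encL2 !PoszM ni; nia.
  exists (add_at a i (-1)), (add_at b j (-1)); split.
    by have := encodes_add_at i j (-1) encL; rewrite !mulrN1.
  by apply: (admissible_lower (s := i%:Z + n%:Z * t)); rewrite ?res_small ?qextE //; lia.
Qed.

(** * The points x(lambda, k) *)

Definition part_coef (l : seq nat) (r : nat) : int := (nth 0%N l (n - 1 - r))%:Z.

Lemma inX_nth_le l p : inX n m l -> (p < n)%N -> (nth 0%N l p <= m)%N.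
Proof. by case/and3P => /eqP size_l _ /allP le_m lt_p; apply/le_m/mem_nth; rewrite size_l. Qed.

Lemma inX_nth_geq l p q : inX n m l -> (p <= q)%N -> (q < n)%N ->
  (nth 0%N l q <= nth 0%N l p)%N.
Proof.
case/and3P => /eqP size_l sorted_l _ le_pq lt_q.
by apply: (sorted_leq_nth (rev_trans leq_trans) leqnn 0%N sorted_l); rewrite ?inE ?size_l //; lia.
Qed.

Lemma qnondecr_part l : inX n m l -> qnondecr (part_coef l).
Proof.
move=> Xl y; rewrite [y](absz_modz_divz_eq _ n_gt0); set r := `|_|%N; set q := (y %/ n)%Z.
have lt_r : (r < n)%N by apply: absz_modz_lt.
rewrite qextE // /part_coef; case: (ltnP r.+1 n) => lt_r1.
  have -> : r%:Z + n%:Z * q + 1 = r.+1%:Z + n%:Z * q by lia.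
  by rewrite qextE // /part_coef; have := inX_nth_geq (p := n - 1 - r.+1) (q := n - 1 - r) Xl; lia.
have -> : r%:Z + n%:Z * q + 1 = 0%:Z + n%:Z * (q + 1) by lia.
by rewrite qextE // /part_coef; have := inX_nth_le (p := n - 1 - r) Xl; lia.
Qed.

Lemma crossing_conj_part l (j : 'I_m) :
  inX n m l -> crossing (part_coef l) j (n%:Z - (conj_part l j.+1)%:Z).
Proof.
move=> Xl; have [/eqP size_l sorted_l _] := and3P Xl; have lt_jm := ltn_ord j.
set c := conj_part l j.+1; have le_cn : (c <= n)%N by rewrite -size_l count_size.
have nth_leq p : (p < n)%N -> (j < nth 0%N l p)%N = (p < c)%N.
  by move=> lt_pn; rewrite (sorted_geq_nth_count _ sorted_l) ?size_l.
apply/andP; split.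
  case: (ltnP c n) => [lt_cn | ge_cn].
    have -> : n%:Z - c%:Z - 1 = (n - 1 - c)%N%:Z by lia.
    rewrite qext_nat /part_coef; last lia.
    by have := nth_leq c lt_cn; rewrite ltnn subKn; lia.
  have -> : n%:Z - c%:Z - 1 = n.-1%:Z + n%:Z * -1 by lia.
  by rewrite qextE /part_coef; [have := inX_nth_le (p := n - 1 - n.-1) Xl | ]; lia.
have [c0 | c_gt0] := posnP c.
  by rewrite c0 -[n%:Z - 0]add0r subr0 -[n%:Z]mulr1 qextE /part_coef //; lia.
have -> : n%:Z - c%:Z = (n - c)%N%:Z by lia.
rewrite qext_nat /part_coef; last lia.
have -> : (n - 1 - (n - c) = c.-1)%N by lia.
by have := nth_leq c.-1; lia.
Qed.

Lemma res_nat (r : nat) : (r < n)%N -> res r%:Z = r.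
Proof. by move=> lt_rn; rewrite -[r%:Z]addr0 -(mulr0 n%:Z) res_small. Qed.

Lemma iter_nuinv_fst L p (i i' : 'I_n) :
  (i' : nat) = res (i%:Z + p%:Z) -> (iter p (@nuinv n m) L).1 i = L.1 i'.
Proof.
elim: p => [|p IHp] in i *.
  by move=> i'E; congr (L.1 _); apply: val_inj => /=; rewrite i'E addr0 res_nat.
move=> i'E; rewrite iterS ffunE; apply: IHp; rewrite i'E /=.
have -> : (i.+1 %% n)%N%:Z + p%:Z = i%:Z + p.+1%:Z + n%:Z * - (i.+1 %/ n)%N%:Z.
  by have := divn_eq i.+1 n; lia.
by rewrite resMDr.
Qed.

Lemma iter_nu_fst L p (i i' : 'I_n) :
  (i' : nat) = res (i%:Z - p%:Z) -> (iter p (@nu n m) L).1 i = L.1 i'.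
Proof.
elim: p => [|p IHp] in i *.
  by move=> i'E; congr (L.1 _); apply: val_inj => /=; rewrite i'E subr0 res_nat.
move=> i'E; rewrite iterS ffunE; apply: IHp; rewrite i'E /=.
have -> : ((i + n).-1 %% n)%N%:Z - p%:Z = i%:Z - p.+1%:Z + n%:Z * (1 - ((i + n).-1 %/ n)%N%:Z).
  by have := divn_eq (i + n).-1 n; lia.
by rewrite resMDr.
Qed.

Lemma nupowN_fst (L : sv n m) k (i i' : 'I_n) :
  (i' : nat) = res (i%:Z + k) -> (nupow (- k) L).1 i = L.1 i'.
Proof.
case: k => [[|p] | p] i'E.
- by rewrite oppr0; apply: (iter_nuinv_fst L (p := 0)).
- exact: (iter_nuinv_fst L (p := p.+1)).
- by apply: (iter_nu_fst L (p := p.+1)); rewrite i'E NegzE.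
Qed.

Lemma nupow_snd (L : sv n m) k : (nupow k L).2 = L.2.
Proof. by case: k => p /=; elim: p => //= p ->. Qed.

Definition xk_alpha (l : seq nat) (k : int) (r : nat) : int := qext (part_coef l) (r%:Z + k).
Definition xk_beta (l : seq nat) (k : int) (j : nat) : int := (conj_part l j.+1)%:Z + k.

Lemma xk_encodes l k : encodes (xk n m l k) (xk_alpha l k) (xk_beta l k).
Proof.
split=> [i | j]; rewrite /xk /addm ffunE /=; last first.
  by rewrite nupow_snd ffunE /xk_beta PoszD !PoszM; ring.
have := absz_modz_divz_eq (i%:Z + k) n_gt0.
set r := res (i%:Z + k); set q := ((i%:Z + k) %/ n)%Z => ikE.
have lt_rn : (r < n)%N by apply: absz_modz_lt.
rewrite (nupowN_fst _ (i' := Ordinal lt_rn)) // ffunE /xk_alpha /= ikE qextE // /part_coef.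
have -> : k = r%:Z + n%:Z * q - i%:Z by lia.
have lt_in := ltn_ord i; rewrite !PoszD !PoszM.
have -> : (n - 1 - r)%N%:Z = n%:Z - 1 - r%:Z by lia.
have -> : (n - 1 - i)%N%:Z = n%:Z - 1 - i%:Z by lia.
ring.
Qed.

Lemma xk_admissible l k : inX n m l -> admissible (xk_alpha l k) (xk_beta l k).
Proof.
move=> Xl; split=> [y | j]; rewrite ?/crossing !qext_shift.
  by rewrite addrAC; apply: qnondecr_part.
have -> : n%:Z - xk_beta l k j - 1 + k = n%:Z - (conj_part l j.+1)%:Z - 1 by rewrite /xk_beta; ring.
have -> : n%:Z - xk_beta l k j + k = n%:Z - (conj_part l j.+1)%:Z by rewrite /xk_beta; ring.
exact: crossing_conj_part.
Qed.

Lemma encodes_eq L L' a a' b b' : encodes L a b -> encodes L' a' b' ->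
  (forall r, (r < n)%N -> a r = a' r) -> (forall j : 'I_m, b j = b' j) -> L = L'.
Proof.
case: L L' => [L1 L2] [L1' L2'] [encL1 encL2] [encL1' encL2'] eq_a eq_b /=.
by congr pair; apply/ffunP => x; rewrite ?encL1 ?encL1' ?encL2 ?encL2' ?eq_a ?eq_b.
Qed.

Lemma encodes_alpha_uniq L a a' b b' : encodes L a b -> encodes L a' b' ->
  forall r, (r < n)%N -> a r = a' r.
Proof.
move=> [encL1 _] [encL1' _] r lt_rn; have := encL1 (Ordinal lt_rn).
by rewrite encL1' => /addrI /mulfI -> //; lia.
Qed.

Lemma admissible_encodes_eq L L' a a' b b' :
  encodes L a b -> admissible a b -> encodes L' a' b' -> admissible a' b' ->
  (forall r, (r < n)%N -> a r = a' r) -> L = L'.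
Proof.
move=> encL [mono cross] encL' [_ cross'] eq_a; apply: (encodes_eq encL encL' eq_a) => j.
have := cross' j; rewrite /crossing -!(eq_qext eq_a) => cross'_j.
by have := crossing_uniq mono (cross j) cross'_j; lia.
Qed.

Lemma inX_nseq0 : inX n m (nseq n 0%N).
Proof.
apply/and3P; split; first by rewrite size_nseq.
- by elim: n => //= -[|k] //= ->; rewrite andbT.
- by apply/allP => x /nseqP [-> _].
Qed.

Lemma addm0 (L : sv n m) : addm 0 L = L.
Proof. by case: L => a b; congr pair; apply/ffunP => x; rewrite ffunE mul0r addr0. Qed.

Lemma xk_nseq0 : xk n m (nseq n 0%N) 0 = Lambda0 n m.
Proof. by rewrite /xk oppr0 addm0. Qed.

Lemma admissible_alpha0 L a b : encodes L a b -> admissible a b ->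
  (forall r, (r < n)%N -> a r = 0) -> L = Lambda0 n m.
Proof.
move=> encL admL a0; rewrite -xk_nseq0.
apply: (admissible_encodes_eq encL admL (xk_encodes _ 0) (xk_admissible 0 inX_nseq0)) => r lt_rn.
by rewrite a0 // /xk_alpha addr0 qext_nat // /part_coef nth_nseq if_same.
Qed.

(** * The orbit of Lambda_0 *)

Lemma addijK (L : sv n m) i j (da db : int) : addij (addij L i j da db) i j (- da) (- db) = L.
Proof.
case: L => L1 L2; congr pair; apply/ffunP => x; rewrite !ffunE /=.
all: by case: eqP => _ //; rewrite addrK.
Qed.

Lemma exists_modm_shift (x : int) : exists t (r : nat), (r < m)%N /\ x + m%:Z * t = r%:Z.
Proof.
exists (- (x %/ m)%Z), `|(x %% m)%Z|%N; split; first exact: absz_modz_lt.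
by have := absz_modz_divz_eq x m_gt0; lia.
Qed.

Lemma descend_lower L a b (i : 'I_n) : encodes L a b -> admissible a b ->
  qext a (i%:Z - 1) < a i ->
  exists L' b', [/\ encodes L' (add_at a i (-1)) b', admissible (add_at a i (-1)) b'
                  & tau_step L' L].
Proof.
move=> encL admL lt_ai; have [mono cross] := admL.
have [t [jn [lt_jm aiE]]] := exists_modm_shift (a i - 1).
pose j := Ordinal lt_jm; pose s := i%:Z + n%:Z * t.
have Fs : qext a s = j%:Z + 1 by rewrite qextE //=; lia.
have bjE : n%:Z - b j = s.
  apply: crossing_uniq mono (cross j) _; rewrite /crossing Fs /=.
  have -> : s - 1 = i%:Z - 1 + n%:Z * t by rewrite /s; ring.
  by rewrite qextD; lia.
have encL' := encodes_add_at i j (-1) encL; rewrite !mulrN1 in encL'.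
exists (addij L i j (- n%:Z) (- m%:Z)), (add_at b j (-1)); split => //.
  by apply: (admissible_lower (s := s)); rewrite ?res_small.
exists i, j; left; split; last by have := addijK L i j (- n%:Z) (- m%:Z); rewrite !opprK.
case: encL' => -> ->; rewrite /add_at !eqxx.
have -> : a i = jn%:Z + 1 - m%:Z * t by lia.
have -> : b j = n%:Z - s by lia.
rewrite /s !PoszM; have -> : (n - 1 - i)%N%:Z = n%:Z - 1 - i%:Z by have := ltn_ord i; lia.
ring.
Qed.

Lemma descend_raise L a b (i : 'I_n) : encodes L a b -> admissible a b ->
  a i < qext a (i%:Z + 1) ->
  exists L' b', [/\ encodes L' (add_at a i 1) b', admissible (add_at a i 1) b'
                  & tau_step L' L].
Proof.
move=> encL admL lt_ai; have [mono cross] := admL.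
have [t [jn [lt_jm aiE]]] := exists_modm_shift (a i).
pose j := Ordinal lt_jm; pose s := i%:Z + n%:Z * t.
have Fs : qext a s = j%:Z by rewrite qextE.
have bjE : n%:Z - b j = s + 1.
  apply: crossing_uniq mono (cross j) _; rewrite /crossing addrK Fs /=.
  have -> : s + 1 = i%:Z + 1 + n%:Z * t by rewrite /s; ring.
  by rewrite qextD; lia.
have encL' := encodes_add_at i j 1 encL; rewrite !mulr1 in encL'.
exists (addij L i j n%:Z m%:Z), (add_at b j 1); split => //.
  by apply: (admissible_raise (s := s)); rewrite ?res_small.
exists i, j; right; split; last by rewrite addijK.
case: encL' => -> ->; rewrite /add_at !eqxx.
have -> : a i = jn%:Z - m%:Z * t by lia.
have -> : b j = n%:Z - s - 1 by lia.
rewrite /s !PoszM; have -> : (n - 1 - i)%N%:Z = n%:Z - 1 - i%:Z by have := ltn_ord i; lia.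
ring.
Qed.

Lemma exists_lowering_index (a : nat -> int) : 0 < a n.-1 ->
  exists i : 'I_n, 0 < a i /\ qext a (i%:Z - 1) < a i.
Proof.
move=> top_gt0.
have bounds : qext a (0%:Z - 1) <= a n.-1 - 1 < qext a n.-1%:Z.
  by rewrite qext_pred // qext_nat /=; lia.
have [s [s_range crosses]] := exists_crossing (ltac:(lia) : -1 <= n.-1%:Z) bounds.
have [i sE] : exists i : nat, s = i%:Z by exists `|s|%N; lia.
have lt_in : (i < n)%N by lia.
exists (Ordinal lt_in); move: crosses; rewrite sE qext_nat //=; lia.
Qed.

Lemma exists_raising_index (a : nat -> int) : a 0%N < 0 ->
  exists i : 'I_n, a i < 0 /\ a i < qext a (i%:Z + 1).
Proof.
move=> bot_lt0.
have bounds : qext a 0%:Z <= a 0%N < qext a n%:Z.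
  by rewrite qext_nat // -[n%:Z]add0r -[n%:Z]mulr1 qextE //; lia.
have [s [s_range crosses]] := exists_crossing (ltac:(lia) : 0 <= n%:Z) bounds.
have [i sE] : exists i : nat, s = i.+1%:Z by exists `|s - 1|%N; lia.
have lt_in : (i < n)%N by lia.
have [e1 e2] : s - 1 = i%:Z /\ i%:Z + 1 = s by lia.
by exists (Ordinal lt_in) => /=; rewrite e2 -(qext_nat a lt_in) -e1; lia.
Qed.

Lemma qnondecr_alpha0 a : qnondecr a -> 0 <= a 0%N -> a n.-1 <= 0 ->
  forall r, (r < n)%N -> a r = 0.
Proof.
move=> mono bot_ge0 top_le0 r lt_rn.
have := qext_mono mono (ltac:(lia) : 0%:Z <= r%:Z).
have := qext_mono mono (ltac:(lia) : r%:Z <= n.-1%:Z).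
by rewrite !qext_nat //; lia.
Qed.

Definition alpha_size (a : nat -> int) : nat := \sum_(r < n) `|a r|%N.

Lemma alpha_size_add_at a (i : 'I_n) c :
  (alpha_size (add_at a i c) + absz (a i))%N = (alpha_size a + absz (a i + c)%R)%N.
Proof.
rewrite /alpha_size (bigD1 i) //= [X in _ = (X + _)%N](bigD1 i) //= /add_at eqxx.
rewrite (eq_bigr (fun r : 'I_n => `|a r|%N)); first lia.
by move=> r neq_ri; rewrite ifN_eq //; apply: contraNneq neq_ri => /val_inj.
Qed.

Lemma descend L a b : encodes L a b -> admissible a b ->
  L = Lambda0 n m \/
  exists L' a' b', [/\ encodes L' a' b', admissible a' b',
                       (alpha_size a' < alpha_size a)%N & tau_step L' L].
Proof.
move=> encL admL; have [mono _] := admL.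
have [top_gt0 | top_le0] := ltP 0 (a n.-1).
  have [i [ai_gt0 lt_ai]] := exists_lowering_index top_gt0.
  have [L' [b' [encL' admL' tauL']]] := descend_lower encL admL lt_ai.
  by right; exists L', (add_at a i (-1)), b'; split => //; have := alpha_size_add_at a i (-1); lia.
have [bot_lt0 | bot_ge0] := ltP (a 0%N) 0.
  have [i [ai_lt0 lt_ai]] := exists_raising_index bot_lt0.
  have [L' [b' [encL' admL' tauL']]] := descend_raise encL admL lt_ai.
  by right; exists L', (add_at a i 1), b'; split => //; have := alpha_size_add_at a i 1; lia.
by left; apply: admissible_alpha0 encL admL (qnondecr_alpha0 mono bot_ge0 top_le0).
Qed.

Lemma admissible_in_orbit L a b : encodes L a b -> admissible a b -> in_Tiso_orbit L.
Proof.
have [N] := ubnP (alpha_size a); elim: N => // N IHN in L a b *.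
move=> lt_aN encL admL; have [-> | [L' [a' [b' [encL' admL' lt_a' tauL']]]]] := descend encL admL.
  exact: rt_refl.
by apply: rt_trans (IHN L' a' b' _ encL' admL') (rt_step _ _ _ _ tauL'); lia.
Qed.

Lemma orbit_admissible L : coprime m n -> in_Tiso_orbit L ->
  exists a b, encodes L a b /\ admissible a b.
Proof.
move=> co_mn orbitL.
have : exists a b, encodes (Lambda0 n m) a b /\ admissible a b.
  by exists (xk_alpha (nseq n 0%N) 0), (xk_beta (nseq n 0%N) 0);
     rewrite -xk_nseq0; split; [apply: xk_encodes | apply: xk_admissible inX_nseq0].
elim: orbitL => [L1 L2 tauL [a [b [encL admL]]] | // | L1 L2 L3 _ IH12 _ IH23 /IH12 /IH23 //].
exact: tau_step_admissible co_mn encL admL tauL.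
Qed.

(** * The image of x and its fibres *)

Lemma qext_crossing_ge0 a t y : qnondecr a -> crossing a (-1) t -> t <= y -> 0 <= qext a y.
Proof. by move=> mono /andP[_ F_ge] /(qext_mono mono); lia. Qed.

(* With [t] the point where [qext a] becomes nonnegative, [qext a] takes its values in
   [0, m] on [t, t + n), and those values form a partition. *)
Definition part_of_qext (a : nat -> int) (t : int) : seq nat :=
  mkseq (fun p => `|qext a ((n - 1 - p)%N%:Z + t)|%N) n.

Lemma part_of_qextE a t r : qnondecr a -> crossing a (-1) t -> (r < n)%N ->
  part_coef (part_of_qext a t) r = qext a (r%:Z + t).
Proof.
move=> mono crosses lt_rn; rewrite /part_coef nth_mkseq; last lia.
rewrite gez0_abs; last by apply: qext_crossing_ge0 mono crosses _; lia.
by congr (qext a _); lia.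
Qed.

Lemma inX_part_of_qext a t : qnondecr a -> crossing a (-1) t -> inX n m (part_of_qext a t).
Proof.
move=> mono crosses; have ge0 p := @qext_crossing_ge0 a t ((n - 1 - p)%N%:Z + t) mono crosses.
apply/and3P; rewrite /part_of_qext; split; first by rewrite size_mkseq.
- apply/(sortedP 0%N) => p; rewrite size_mkseq => lt_p1n.
  rewrite !nth_mkseq /= -?lez_nat ?gez0_abs ?ge0; try lia.
  by apply: (qext_mono mono); lia.
- apply/(all_nthP 0%N) => p; rewrite size_mkseq => lt_pn.
  have := qext_mono mono (ltac:(lia) : (n - 1 - p)%N%:Z + t <= t - 1 + n%:Z * 1).
  have /andP[F_lt _] := crosses.
  by rewrite nth_mkseq // -lez_nat qextD gez0_abs ?ge0; lia.
Qed.

Lemma admissible_xk L a b : encodes L a b -> admissible a b ->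
  exists l k, inX n m l /\ xk n m l k = L.
Proof.
move=> encL admL; have [mono _] := admL; have [t crosses] := exists_qext_crossing a (-1).
set l := part_of_qext a t; have Xl : inX n m l := inX_part_of_qext mono crosses.
have coefE : forall r, (r < n)%N -> part_coef l r = qext a (r%:Z + t).
  by move=> r; apply: part_of_qextE.
exists l, (- t); split => //.
apply: (admissible_encodes_eq (xk_encodes l (- t)) (xk_admissible (- t) Xl) encL admL) => r lt_rn.
by rewrite /xk_alpha (eq_qext coefE) qext_shift addrNK qext_nat.
Qed.

Lemma nth_lbar l p : size l = n ->
  nth 0%N (lbar l) p = if (p.+1 < n)%N then nth 0%N l p.+1 else 0%N.
Proof.
move=> size_l; rewrite /lbar nth_rcons size_behead size_l nth_behead.
by case: ltnP => lt1; case: ltnP => lt2; rewrite ?if_same //; lia.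
Qed.

Lemma inX_lbar l : inX n m l -> inX n m (lbar l).
Proof.
move=> Xl; have [/eqP size_l _ _] := and3P Xl.
have size_lbar : size (lbar l) = n by rewrite size_rcons size_behead size_l; lia.
apply/and3P; split; first by rewrite size_lbar.
- apply/(sortedP 0%N) => p; rewrite size_lbar => lt_p1n; rewrite !nth_lbar //=.
  by case: ltnP => lt1; case: ltnP => lt2 //; [apply: inX_nth_geq Xl _ _ | ]; lia.
- apply/(all_nthP 0%N) => p; rewrite size_lbar => lt_pn; rewrite nth_lbar //.
  by case: ltnP => // lt_p1n; apply: inX_nth_le Xl _.
Qed.

Lemma qext_part_lbar l y : size l = n -> nth 0%N l 0 = m ->
  qext (part_coef (lbar l)) y = qext (part_coef l) (y - 1).
Proof.
move=> size_l l0; rewrite [y](absz_modz_divz_eq _ n_gt0); set r := `|_|%N; set q := (y %/ n)%Z.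
have lt_rn : (r < n)%N by apply: absz_modz_lt.
rewrite qextE // /part_coef nth_lbar //; have [r0 | r_gt0] := posnP r.
  have -> : r%:Z + n%:Z * q - 1 = n.-1%:Z + n%:Z * (q - 1) by lia.
  rewrite qextE /part_coef; last lia.
  have -> : (n - 1 - n.-1 = 0)%N by lia.
  by rewrite ifF ?l0; [ring | lia].
have -> : r%:Z + n%:Z * q - 1 = r.-1%:Z + n%:Z * q by lia.
rewrite qextE /part_coef; last lia.
by rewrite ifT; [have -> : ((n - 1 - r).+1 = n - 1 - r.-1)%N by lia | lia].
Qed.

Lemma xk_lbar l k : inX n m l -> nth 0%N l 0 = m -> xk n m (lbar l) (k + 1) = xk n m l k.
Proof.
move=> Xl l0; have [/eqP size_l _ _] := and3P Xl.
apply: (admissible_encodes_eq (xk_encodes _ _) (xk_admissible _ (inX_lbar Xl))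
                              (xk_encodes _ _) (xk_admissible _ Xl)) => r _.
by rewrite /xk_alpha qext_part_lbar // addrA addrK.
Qed.

Lemma part_coef_inj l l' : inX n m l -> inX n m l' ->
  qext (part_coef l) =1 qext (part_coef l') -> l = l'.
Proof.
move=> Xl Xl' eqF; have [/eqP size_l _ _] := and3P Xl; have [/eqP size_l' _ _] := and3P Xl'.
apply: (@eq_from_nth _ 0%N); first by rewrite size_l size_l'.
move=> p; rewrite size_l => lt_pn; have := eqF (n - 1 - p)%N%:Z.
rewrite !qext_nat /part_coef; try lia.
have -> : (n - 1 - (n - 1 - p) = p)%N by lia.
by move/eqP; rewrite eqz_nat => /eqP.
Qed.

Lemma part_head_of_shift l l' d : inX n m l -> inX n m l' ->
  (forall y, qext (part_coef l') y = qext (part_coef l) (y - d.+1%:Z)) ->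
  nth 0%N l 0 = m.
Proof.
move=> Xl Xl' shiftF; have := inX_nth_le (p := 0) Xl n_gt0.
have := qext_mono (qnondecr_part Xl) (ltac:(lia) : 0%:Z - d.+1%:Z <= 0%:Z - 1).
rewrite -shiftF qext_pred // qext_nat // /part_coef /=.
have -> : (n - 1 - n.-1 = 0)%N by lia.
lia.
Qed.

Lemma equivX_shift (d : nat) l l' k : inX n m l -> inX n m l' ->
  (forall y, qext (part_coef l') y = qext (part_coef l) (y - d%:Z)) ->
  equivX n m (l, k) (l', k + d%:Z).
Proof.
elim: d => [|d IHd] in l k *; move=> Xl Xl' shiftF.
  rewrite addr0 (part_coef_inj Xl Xl'); first exact: rst_refl.
  by move=> y; rewrite shiftF subr0.
have l0 := part_head_of_shift Xl Xl' shiftF.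
apply: rst_trans (_ : equivX n m (l, k) (lbar l, k + 1)) _; first exact: rst_step.
have -> : k + d.+1%:Z = k + 1 + d%:Z by lia.
apply: IHd (inX_lbar Xl) Xl' _ => y; have [/eqP size_l _ _] := and3P Xl.
by rewrite qext_part_lbar // shiftF; congr (qext _ _); lia.
Qed.

Lemma xk_inj l l' k k' : inX n m l -> inX n m l' -> xk n m l k = xk n m l' k' ->
  equivX n m (l, k) (l', k').
Proof.
move=> Xl Xl' eq_xk; have := xk_encodes l' k'; rewrite -eq_xk => enc'.
have shiftF y : qext (part_coef l) (y + k) = qext (part_coef l') (y + k').
  by have := eq_qext (encodes_alpha_uniq (xk_encodes l k) enc') y; rewrite /xk_alpha !qext_shift.
have [le_kk' | lt_k'k] := lerP k k'.
  have -> : k' = k + `|k' - k|%N%:Z by lia.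
  apply: equivX_shift => // y; have := shiftF (y - k'); rewrite subrK => <-.
  by congr (qext _ _); lia.
apply: rst_sym; have -> : k = k' + `|k - k'|%N%:Z by lia.
apply: equivX_shift => // y; have := shiftF (y - k); rewrite subrK => ->.
by congr (qext _ _); lia.
Qed.

End Orbit.

Theorem theorem4p14 (n m : nat) :
  (0 < n)%N -> (n < m)%N -> coprime m n ->
  (forall (l : seq nat) (k : int),
      inX n m l -> nth 0%N l 0 = m ->
      xk n m (lbar l) (k + 1)%R = xk n m l k) /\
  (forall (l l' : seq nat) (k k' : int),
      inX n m l -> inX n m l' -> xk n m l k = xk n m l' k' ->
      equivX n m (l, k) (l', k')) /\
  (forall L : sv n m,
      @in_Tiso_orbit n m L <-> exists (l : seq nat) (k : int), inX n m l /\ xk n m l k = L).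
Proof.
move=> n_gt0 lt_nm co_mn; have m_gt0 : (0 < m)%N by lia.
split; first by move=> l k; apply: xk_lbar.
split; first by move=> l l' k k'; apply: xk_inj.
move=> L; split.
  move=> /(orbit_admissible n_gt0 m_gt0 co_mn) [a [b [encL admL]]].
  exact: admissible_xk encL admL.
move=> [l [k [Xl <-]]].
exact: admissible_in_orbit (xk_encodes _ _ l k) (xk_admissible _ _ k Xl).
Qed.
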